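(* Let $\boldsymbol{S}_{\rm B},\boldsymbol{S}_{\rm W}\in\mathbb{R}^{M\times M}$ be the between-class and within-class scatter matrices of a labelled data set (defined in the context), with $\boldsymbol{S}_{\rm W}$ invertible, and let $\mathcal{R}(\boldsymbol{u})=\frac{\boldsymbol{u}^\top\boldsymbol{S}_{\rm B}\boldsymbol{u}}{\boldsymbol{u}^\top\boldsymbol{S}_{\rm W}\boldsymbol{u}}$ for nonzero $\boldsymbol{u}\in\mathbb{R}^M$. Let $\boldsymbol{u}_1,\ldots,\boldsymbol{u}_{n-1}$ ($2\le n\le M$) be the GO-LDA discriminant directions (defined in the context), and let $\boldsymbol{u}_n\in\mathbb{R}^M$ be a solution of $$\max_{\boldsymbol{u}}\ \mathcal{R}(\boldsymbol{u})\quad\text{s.t.}\quad\boldsymbol{u}\perp\boldsymbol{u}_i\ \text{ for all } i=1,\ldots,n-1.$$ Define $\boldsymbol{U}_{n-1}=(\boldsymbol{u}_1\ \cdots\ \boldsymbol{u}_{n-1})\in\mathbb{R}^{M\times(n-1)}$, let $\boldsymbol{B}_{n-1}\in\mathbb{R}^{(n-1)\times M}$ be the matrix whose $i$-th row is $\boldsymbol{u}_i^\top\boldsymbol{S}_{\rm W}^{-1}\boldsymbol{S}_{\rm B}$, and let $\boldsymbol{T}_{n-1}\in\mathbb{R}^{(n-1)\times(n-1)}$ have $(i,j)$ entry $\boldsymbol{u}_i^\top\boldsymbol{S}_{\rm W}^{-1}\boldsymbol{u}_j$. Then $\boldsymbol{u}_n$ is an eigenvector corresponding to the largest eigenvalue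 of the generalised eigenvalue problem $$\left(\boldsymbol{S}_{\rm B}-\boldsymbol{U}_{n-1}\boldsymbol{T}_{n-1}^{-1}\boldsymbol{B}_{n-1}\right)\boldsymbol{u}=\mu\boldsymbol{S}_{\rm W}\boldsymbol{u}.$$
   Context: Given $N$ samples $\boldsymbol{y}_1,\ldots,\boldsymbol{y}_N\in\mathbb{R}^M$ partitioned into $C$ classes, where class $j$ consists of samples $\boldsymbol{y}^j_1,\ldots,\boldsymbol{y}^j_{N_j}$. Let $\bar{\boldsymbol{y}}$ be the overall mean and $\bar{\boldsymbol{y}}_j$ the mean of class $j$. The between-class scatter is $\boldsymbol{S}_{\rm B}=\sum_{j=1}^C(\bar{\boldsymbol{y}}_j-\bar{\boldsymbol{y}})(\bar{\boldsymbol{y}}_j-\bar{\boldsymbol{y}})^\top$ and the within-class scatter is $\boldsymbol{S}_{\rm W}=\sum_{j=1}^C\sum_{k=1}^{N_j}(\boldsymbol{y}^j_k-\bar{\boldsymbol{y}}_j)(\boldsymbol{y}^j_k-\bar{\boldsymbol{y}}_j)^\top$, assumed invertible. GO-LDA discriminant directions are defined recursively: $\boldsymbol{u}_1$ is the (normalised) eigenvector corresponding to the largest eigenvalue of the generalised eigenvalue problem $\boldsymbol{S}_{\rm B}\boldsymbol{v}=\lambda\boldsymbol{S}_{\rm W}\boldsymbol{v}$; for $k\ge2$, $\boldsymbol{u}_k$ is a (normalised) maximiser of $\mathcal{R}(\boldsymbol{u})$ subject to $\boldsymbol{u}$ being orthogonal to each of $\boldsymbol{u}_1,\ldots,\boldsymbol{u}_{k-1}$.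 *)

From HB Require Import structures.
From mathcomp Require Import all_boot all_order all_algebra.
From mathcomp Require Import reals.
Set Implicit Arguments. Unset Strict Implicit. Unset Printing Implicit Defensive.
Import Order.TTheory GRing.Theory Num.Theory.
Local Open Scope ring_scope.

Section GOLDA.
Variable R : realType.
Variable M : nat.

Definition qf (u : 'cV[R]_M) (A : 'M[R]_M) (v : 'cV[R]_M) : R :=
  (u^T *m A *m v) 0 0.

Definition dotv (u v : 'cV[R]_M) : R := (u^T *m v) 0 0.

Definition class_size N C (lab : 'I_N -> 'I_C) (j : 'I_C) : nat :=
  #|[set k | lab k == j]|.

Definition class_mean N C (y : 'I_N -> 'cV[R]_M) (lab : 'I_N -> 'I_C)
  (j : 'I_C) : 'cV[R]_M :=
  (class_size lab j)%:R^-1 *: \sum_(k < N | lab k == j) y k.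

Definition overall_mean N (y : 'I_N -> 'cV[R]_M) : 'cV[R]_M :=
  N%:R^-1 *: \sum_(k < N) y k.

Definition scatter_B N C (y : 'I_N -> 'cV[R]_M) (lab : 'I_N -> 'I_C)
  : 'M[R]_M :=
  \sum_(j < C) (class_mean y lab j - overall_mean y) *m
               (class_mean y lab j - overall_mean y)^T.

Definition scatter_W N C (y : 'I_N -> 'cV[R]_M) (lab : 'I_N -> 'I_C)
  : 'M[R]_M :=
  \sum_(j < C) \sum_(k < N | lab k == j)
     (y k - class_mean y lab j) *m (y k - class_mean y lab j)^T.

Definition rayleigh (SB SW : 'M[R]_M) (u : 'cV[R]_M) : R :=
  qf u SB u / qf u SW u.

Definition gen_eigenvalue (A B : 'M[R]_M) (mu : R) : Prop :=
  exists2 v : 'cV[R]_M, v != 0 & A *m v = mu *: (B *m v).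

Definition top_gen_eigenvector (A B : 'M[R]_M) (v : 'cV[R]_M) : Prop :=
  v != 0 /\
  exists mu : R, A *m v = mu *: (B *m v) /\
    forall mu' : R, gen_eigenvalue A B mu' -> mu' <= mu.

Definition constrained_maximiser (SB SW : 'M[R]_M) (u : nat -> 'cV[R]_M)
  (i : nat) (x : 'cV[R]_M) : Prop :=
  [/\ x != 0,
      (forall j, (j < i)%N -> dotv x (u j) = 0) &
      (forall z : 'cV[R]_M, z != 0 -> (forall j, (j < i)%N -> dotv z (u j) = 0) ->
         rayleigh SB SW z <= rayleigh SB SW x)].

(* u 0, ..., u (k-1) are the first k GO-LDA directions (u_1,...,u_k). *)
Definition golda_directions (SB SW : 'M[R]_M) (u : nat -> 'cV[R]_M) (k : nat)
  : Prop :=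
  forall i, (i < k)%N ->
    dotv (u i) (u i) = 1 /\
    (if i == 0%N then top_gen_eigenvector SB SW (u i)
     else constrained_maximiser SB SW u i (u i)).

Definition Umat (m : nat) (u : nat -> 'cV[R]_M) : 'M[R]_(M, m) :=
  \matrix_(r < M, i < m) u i r 0.

Definition Bmat (m : nat) (SB SW : 'M[R]_M) (u : nat -> 'cV[R]_M) : 'M[R]_(m, M) :=
  \matrix_(i < m, c < M) ((u i)^T *m invmx SW *m SB) 0 c.

Definition Tmat (m : nat) (SW : 'M[R]_M) (u : nat -> 'cV[R]_M) : 'M[R]_m :=
  \matrix_(i < m, j < m) qf (u i) (invmx SW) (u j).

End GOLDA.

(* Write B, W for S_B, S_W, U for U_{n-1}, x for u_n and rho = R(x).  The matrix
   K = U (U^T W^-1 U)^-1 U^T W^-1 is a projector with U^T W^-1 K = U^T W^-1, and the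
   deflated matrix is B - K B.  Since x maximises R on the orthogonal complement of U,
   the form of B - rho W vanishes at x and is stationary there along that complement;
   the vector W^-1 (1 - K)(B - rho W) x lies in the complement and has zero W-norm,
   which gives (B - K B) x = rho W x.  Conversely U^T W^-1 (B - K B) = 0, so an
   eigenvector v with eigenvalue mu <> 0 is orthogonal to U; there v^T K = 0, hence
   mu = R(v) <= rho, while rho >= 0 covers mu = 0. *)

From HB Require Import structures.
From mathcomp Require Import all_boot all_order all_algebra.
From mathcomp Require Import reals ring lra.
Import Order.TTheory GRing.Theory Num.Theory.
Local Open Scope ring_scope.
Set Implicit Arguments. Unset Strict Implicit. Unset Printing Implicit Defensive.

Lemma quadratic_le0_lin_eq0 (R : realFieldType) (c d : R) :
  (forall t, 2 * t * c + t ^+ 2 * d <= 0) -> c = 0.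
Proof.
move=> le0; set k := `|d| + 1.
have k_gt0 : 0 < k by rewrite ltr_pwDr.
have lead_gt0 : 0 < 2 * k + d.
  by have := lerNnormlW (lexx `|d|); have := normr_ge0 d; rewrite /k; lra.
have := le0 (c / k).
have -> : 2 * (c / k) * c + (c / k) ^+ 2 * d = (c / k) ^+ 2 * (2 * k + d).
  by field; rewrite gt_eqF.
rewrite pmulr_lle0 // => sq_le0.
have : (c / k) ^+ 2 == 0 by rewrite eq_le sq_le0 sqr_ge0.
by rewrite sqrf_eq0 mulf_eq0 invr_eq0 (gt_eqF k_gt0) orbF => /eqP.
Qed.

Lemma inj_mulmx_unitmx (F : fieldType) m (T : 'M[F]_m) :
  (forall a : 'cV_m, T *m a = 0 -> a = 0) -> T \in unitmx.
Proof.
move=> T_inj; rewrite -unitmx_tr -row_free_unit -kermx_eq0.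
apply/eqP/row_matrixP => i; rewrite row0; apply: trmx_inj; rewrite trmx0.
by apply: T_inj; apply: trmx_inj; rewrite trmx_mul trmxK -row_mul mulmx_ker row0 trmx0.
Qed.

Section QuadraticForm.
Variables (R : realType) (M : nat).
Implicit Types (A : 'M[R]_M) (v x z : 'cV[R]_M).

Lemma dotvC x z : dotv x z = dotv z x.
Proof. by rewrite /dotv !mxE; apply: eq_bigr => k _; rewrite !mxE mulrC. Qed.

Lemma qf_sym A x z : A^T = A -> qf x A z = qf z A x.
Proof.
move=> A_sym; rewrite /qf.
have -> : (x^T *m A *m z) 0 0 = (x^T *m A *m z)^T 0 0 by rewrite [RHS]mxE.
by rewrite !trmx_mul trmxK A_sym mulmxA.
Qed.

Lemma qfDl A x y z : qf (x + y) A z = qf x A z + qf y A z.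
Proof. by rewrite /qf raddfD /= !mulmxDl [LHS]mxE. Qed.

Lemma qfDr A x y z : qf z A (x + y) = qf z A x + qf z A y.
Proof. by rewrite /qf !mulmxDr [LHS]mxE. Qed.

Lemma qfZl A a x z : qf (a *: x) A z = a * qf x A z.
Proof. by rewrite /qf linearZ /= -!scalemxAl [LHS]mxE. Qed.

Lemma qfZr A a x z : qf z A (a *: x) = a * qf z A x.
Proof. by rewrite /qf -!scalemxAr [LHS]mxE. Qed.

Lemma qfDmx A1 A2 x z : qf x (A1 + A2) z = qf x A1 z + qf x A2 z.
Proof. by rewrite /qf mulmxDr mulmxDl [LHS]mxE. Qed.

Lemma qfNmx A x z : qf x (- A) z = - qf x A z.
Proof. by rewrite /qf mulmxN mulNmx [LHS]mxE. Qed.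

Lemma qfZmx A a x z : qf x (a *: A) z = a * qf x A z.
Proof. by rewrite /qf -scalemxAr -scalemxAl [LHS]mxE. Qed.

Lemma qf_expand A x z t : A^T = A ->
  qf (x + t *: z) A (x + t *: z) = qf x A x + (2 * t * qf x A z + t ^+ 2 * qf z A z).
Proof. by move=> A_sym; rewrite qfDl !qfDr !qfZl !qfZr (qf_sym z x A_sym); ring. Qed.

Lemma sym_qf_stationary A x z : A^T = A -> qf x A x = 0 ->
  (forall t, qf (x + t *: z) A (x + t *: z) <= 0) -> qf x A z = 0.
Proof.
move=> A_sym qx0 le0; apply: (@quadratic_le0_lin_eq0 _ _ (qf z A z)) => t.
by have := le0 t; rewrite qf_expand // qx0 add0r.
Qed.

Definition psd_mx A := A^T = A /\ forall v, 0 <= qf v A v.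

Lemma psd_mx0 : psd_mx 0.
Proof. by split=> [|v]; [rewrite trmx0 | rewrite /qf mulmx0 mul0mx mxE]. Qed.

Lemma psd_mxD A1 A2 : psd_mx A1 -> psd_mx A2 -> psd_mx (A1 + A2).
Proof.
move=> [sym1 ge1] [sym2 ge2]; split=> [|v]; first by rewrite linearD /= sym1 sym2.
by rewrite qfDmx addr_ge0.
Qed.

Lemma psd_mx_outer (a : 'cV[R]_M) : psd_mx (a *m a^T).
Proof.
split=> [|v]; first by rewrite trmx_mul trmxK.
have -> : qf v (a *m a^T) v = dotv v a * dotv a v.
  by rewrite /qf mulmxA -(mulmxA _ a^T) [LHS]mxE big_ord1.
by rewrite dotvC -expr2 sqr_ge0.
Qed.

Lemma qf_unit_col A (i : 'I_M) v : qf ('e_i)^T A v = (A *m v) i 0.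
Proof. by rewrite /qf trmxK -mulmxA -rowE mxE. Qed.

Lemma psd_qf_eq0 A v : psd_mx A -> qf v A v = 0 -> A *m v = 0.
Proof.
(* v is a maximum of the form of -A, hence stationary in every direction e_i. *)
move=> [A_sym A_ge0] qv0; apply/matrixP => i j; rewrite ord1 [RHS]mxE -qf_unit_col.
rewrite (qf_sym _ _ A_sym) -[LHS]opprK -qfNmx.
rewrite (@sym_qf_stationary (- A)) ?oppr0 //.
- by rewrite linearN /= A_sym.
- by rewrite qfNmx qv0 oppr0.
- by move=> t; rewrite qfNmx oppr_le0.
Qed.

Lemma psd_unitmx_qf_gt0 A v : psd_mx A -> A \in unitmx -> v != 0 -> 0 < qf v A v.
Proof.
move=> A_psd A_unit; apply: contraNT; rewrite -leNgt => le0.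
have qv0 : qf v A v = 0 by apply/eqP; rewrite eq_le le0 A_psd.2.
by rewrite -[v](mulKmx A_unit) (psd_qf_eq0 A_psd qv0) mulmx0.
Qed.

End QuadraticForm.

(* The oblique projection onto the column space of U along the vectors that are
   W^-1-orthogonal to it. *)
Definition deflation_proj (R : realType) M m (W : 'M[R]_M) (U : 'M[R]_(M, m)) :=
  U *m invmx (U^T *m invmx W *m U) *m (U^T *m invmx W).

Section Deflation.
Variables (R : realType) (M m : nat) (B W : 'M[R]_M) (U : 'M[R]_(M, m)).
Hypotheses (B_psd : psd_mx B) (W_psd : psd_mx W) (W_unit : W \in unitmx).
Hypothesis U_inj : forall a : 'cV_m, U *m a = 0 -> a = 0.

Local Notation Wi := (invmx W).
Local Notation T := (U^T *m Wi *m U).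
Local Notation K := (deflation_proj W U).

Lemma invmx_sym : Wi^T = Wi.
Proof. by rewrite trmx_inv W_psd.1. Qed.

Lemma W_qf_gt0 (v : 'cV[R]_M) : v != 0 -> 0 < qf v W v.
Proof. exact: psd_unitmx_qf_gt0. Qed.

Lemma qf_invmx_eq0 (v : 'cV[R]_M) : qf v Wi v = 0 -> v = 0.
Proof.
move=> qv0; have : qf (Wi *m v) W (Wi *m v) = 0.
  by rewrite -qv0 /qf trmx_mul invmx_sym -!mulmxA (mulmxA W) mulmxV // mul1mx.
move=> /psd_qf_eq0 -/(_ W_psd).
by rewrite mulmxA mulmxV // mul1mx.
Qed.

Lemma gram_unitmx : T \in unitmx.
Proof.
apply: inj_mulmx_unitmx => a Ta0; apply: U_inj; apply: qf_invmx_eq0.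
by rewrite /qf trmx_mul -!mulmxA (mulmxA U^T) (mulmxA (U^T *m Wi)) Ta0 mulmx0 mxE.
Qed.

Lemma gram_mulmx_deflation_proj : U^T *m Wi *m K = U^T *m Wi.
Proof. by rewrite /deflation_proj !mulmxA mulmxV ?gram_unitmx // mul1mx. Qed.

Lemma deflation_proj_mulW_orth (x : 'cV[R]_M) : U^T *m x = 0 -> K *m (W *m x) = 0.
Proof.
by move=> Ux0; rewrite /deflation_proj -!mulmxA (mulmxA Wi) mulVmx // mul1mx Ux0 !mulmx0.
Qed.

Lemma trmx_deflation_proj_orth (z : 'cV[R]_M) : U^T *m z = 0 -> K^T *m z = 0.
Proof. by move=> Uz0; rewrite /deflation_proj !trmx_mul -!mulmxA Uz0 !mulmx0. Qed.

Lemma deflated_eigen_orth mu (v : 'cV[R]_M) :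
  (B - K *m B) *m v = mu *: (W *m v) -> mu *: (U^T *m v) = 0.
Proof.
move=> /(congr1 (mulmx (U^T *m Wi))).
rewrite mulmxA mulmxBr (mulmxA _ K) gram_mulmx_deflation_proj subrr mul0mx.
by rewrite -scalemxAr mulmxA -(mulmxA U^T) mulVmx // mulmx1 => <-.
Qed.

Section Maximiser.
Variable x : 'cV[R]_M.
Hypotheses (x_neq0 : x != 0) (x_orth : U^T *m x = 0).
Hypothesis x_max : forall z, z != 0 -> U^T *m z = 0 ->
  rayleigh B W z <= rayleigh B W x.

Local Notation rho := (rayleigh B W x).

Lemma maximiser_stationary (z : 'cV[R]_M) :
  U^T *m z = 0 -> qf x (B - rho *: W) z = 0.
Proof.
move=> z_orth; have qWx := W_qf_gt0 x_neq0.
apply: sym_qf_stationary => [|| t].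
- by rewrite linearB /= linearZ /= B_psd.1 W_psd.1.
- by rewrite qfDmx qfNmx qfZmx /rayleigh divfK ?subrr // gt_eqF.
rewrite qfDmx qfNmx qfZmx subr_le0.
have [->|xz_neq0] := eqVneq (x + t *: z) 0; first by rewrite /qf !mulmx0 mxE mulr0.
rewrite -ler_pdivrMr ?W_qf_gt0 //; apply: x_max xz_neq0 _.
by rewrite mulmxDr x_orth -scalemxAr z_orth scaler0 addr0.
Qed.

Lemma maximiser_deflated_eigen : (B - K *m B) *m x = rho *: (W *m x).
Proof.
set A := B - rho *: W; set z := Wi *m ((1%:M - K) *m (A *m x)).
have Wz : W *m z = (1%:M - K) *m (A *m x) by rewrite /z mulmxA mulmxV // mul1mx.
have z_orth : U^T *m z = 0.
  rewrite /z mulmxA (mulmxA _ (1%:M - K)) mulmxBr mulmx1.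
  by rewrite gram_mulmx_deflation_proj subrr mul0mx.
have A_sym : A^T = A by rewrite linearB /= linearZ /= B_psd.1 W_psd.1.
have qWz : qf z W z = qf x A z.
  rewrite /qf -{1}W_psd.1 -trmx_mul Wz trmx_mul linearB /= trmx1 -(mulmxA (A *m x)^T).
  by rewrite (mulmxBl 1%:M) mul1mx trmx_deflation_proj_orth // subr0 trmx_mul A_sym.
have z0 : z = 0.
  apply/eqP; apply: contraTT (eqxx (0 : R)) => /W_qf_gt0.
  by rewrite qWz maximiser_stationary // ltxx.
have -> : (B - K *m B) *m x = (1%:M - K) *m (A *m x) + rho *: (W *m x).
  rewrite /A !mulmxBl mul1mx mulmxBr -!scalemxAl -scalemxAr deflation_proj_mulW_orth //.
  by rewrite scaler0 subr0 mulmxA addrAC subrK.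
by rewrite -Wz z0 mulmx0 add0r.
Qed.

Lemma deflated_eigenvalue_le mu : gen_eigenvalue (B - K *m B) W mu -> mu <= rho.
Proof.
move=> [v v_neq0 eig].
have [->|mu_neq0] := eqVneq mu 0.
  by rewrite /rayleigh divr_ge0 ?B_psd.2 // ltW ?W_qf_gt0.
have v_orth : U^T *m v = 0.
  by move/eqP: (deflated_eigen_orth eig); rewrite scalemx_eq0 (negbTE mu_neq0) => /eqP.
have vK : v^T *m K = 0 by rewrite -(trmxK K) -trmx_mul trmx_deflation_proj_orth // trmx0.
have qBv : qf v B v = mu * qf v W v.
  have : qf v (B - K *m B) v = mu * qf v W v.
    by rewrite /qf -mulmxA eig -scalemxAr [LHS]mxE mulmxA.
  by rewrite qfDmx qfNmx {2}/qf mulmxA vK !mul0mx mxE oppr0 addr0.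
have -> : mu = rayleigh B W v by rewrite /rayleigh qBv mulfK // gt_eqF ?W_qf_gt0.
exact: x_max.
Qed.

Theorem deflated_top_eigenvector : top_gen_eigenvector (B - K *m B) W x.
Proof.
split=> //; exists rho.
by split; [exact: maximiser_deflated_eigen | exact: deflated_eigenvalue_le].
Qed.

End Maximiser.
End Deflation.

Section GOLDAMatrices.
Variables (R : realType) (M : nat).

Lemma scatter_B_psd N C (y : 'I_N -> 'cV[R]_M) (lab : 'I_N -> 'I_C) :
  psd_mx (scatter_B y lab).
Proof.
apply: (big_ind (@psd_mx R M)) => [||j _]; [exact: psd_mx0 | exact: psd_mxD |].
exact: psd_mx_outer.
Qed.

Lemma scatter_W_psd N C (y : 'I_N -> 'cV[R]_M) (lab : 'I_N -> 'I_C) :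
  psd_mx (scatter_W y lab).
Proof.
apply: (big_ind (@psd_mx R M)) => [||j _]; [exact: psd_mx0 | exact: psd_mxD |].
apply: (big_ind (@psd_mx R M)) => [||k _]; [exact: psd_mx0 | exact: psd_mxD |].
exact: psd_mx_outer.
Qed.

Variables (m : nat) (u : nat -> 'cV[R]_M).
Local Notation U := (Umat m u).

Lemma trmx_Umat_mulE p (X : 'M[R]_(M, p)) (i : 'I_m) c :
  (U^T *m X) i c = ((u i)^T *m X) 0 c.
Proof.
have rowE : row i U^T = (u i)^T by apply/rowP => k; rewrite !mxE.
by rewrite -rowE -row_mul [RHS]mxE.
Qed.

Lemma trmx_Umat_mul_eq0 (z : 'cV[R]_M) :
  U^T *m z = 0 <-> forall j, (j < m)%N -> dotv z (u j) = 0.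
Proof.
have colE (j : 'I_m) : (U^T *m z) j 0 = dotv z (u j) by rewrite trmx_Umat_mulE dotvC.
split=> [Uz0 j lt_jm | orth].
  by rewrite -(colE (Ordinal lt_jm)) Uz0 mxE.
by apply/matrixP => j k; rewrite ord1 colE orth // mxE.
Qed.

Lemma TmatE (W : 'M[R]_M) : Tmat m W u = U^T *m invmx W *m U.
Proof.
apply/matrixP => i j; rewrite mxE -mulmxA trmx_Umat_mulE mulmxA /qf !mxE.
by apply: eq_bigr => k _; rewrite !mxE.
Qed.

Lemma BmatE (B W : 'M[R]_M) : Bmat m B W u = U^T *m invmx W *m B.
Proof. by apply/matrixP => i j; rewrite mxE -!mulmxA trmx_Umat_mulE. Qed.

Lemma golda_Umat_orthonormal (SB SW : 'M[R]_M) :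
  golda_directions SB SW u m -> U^T *m U = 1%:M.
Proof.
move=> golda.
have orth i j : (i < j)%N -> (j < m)%N -> dotv (u j) (u i) = 0.
  move=> lt_ij lt_jm; have [_] := golda j lt_jm.
  by rewrite (gtn_eqF (leq_ltn_trans (leq0n i) lt_ij)) => -[_ orth_j _]; apply: orth_j.
apply/matrixP => i j; rewrite trmx_Umat_mulE [RHS]mxE.
have -> : ((u i)^T *m U) 0 j = dotv (u i) (u j).
  by rewrite /dotv !mxE; apply: eq_bigr => k _; rewrite !mxE.
case: (ltngtP i j) => [lt_ij | lt_ji | /val_inj ->].
- by rewrite dotvC orth // -val_eqE (ltn_eqF lt_ij).
- by rewrite orth // -val_eqE (gtn_eqF lt_ji).
- by rewrite eqxx (golda j (ltn_ord j)).1.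
Qed.

End GOLDAMatrices.

Theorem theorem3 (R : realType) (M N C : nat)
  (y : 'I_N -> 'cV[R]_M) (lab : 'I_N -> 'I_C)
  (Hclass : forall j : 'I_C, (0 < class_size lab j)%N)
  (HW : scatter_W y lab \in unitmx)
  (n : nat) (Hn2 : (2 <= n)%N) (HnM : (n <= M)%N)
  (u : nat -> 'cV[R]_M) (un : 'cV[R]_M)
  (Hu : golda_directions (scatter_B y lab) (scatter_W y lab) u n.-1)
  (Hun : constrained_maximiser (scatter_B y lab) (scatter_W y lab) u n.-1 un) :
  top_gen_eigenvector
    (scatter_B y lab
       - Umat n.-1 u *m invmx (Tmat n.-1 (scatter_W y lab) u)
           *m Bmat n.-1 (scatter_B y lab) (scatter_W y lab) u)
    (scatter_W y lab) un.
Proof.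
have UtU := golda_Umat_orthonormal Hu.
have U_inj (a : 'cV_n.-1) : Umat n.-1 u *m a = 0 -> a = 0.
  by move=> Ua0; rewrite -[a]mul1mx -UtU -mulmxA Ua0 mulmx0.
case: Hun => un_neq0 un_orth un_max.
rewrite TmatE BmatE mulmxA -/(deflation_proj _ _).
apply: deflated_top_eigenvector => //; first exact: scatter_B_psd.
- exact: scatter_W_psd.
- exact/trmx_Umat_mul_eq0.
- by move=> z z_neq0 /trmx_Umat_mul_eq0; exact: un_max.
Qed.
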